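(* Let $T$ be a string of length $n$ and $1\le i\le j<n$. Let $k=|\mathit{lrs}_{i,j+1}|$ and $\alpha=T[j+1]$. Then $[j+1-k,j+1]\in\mathsf{MUS}(T[i..j+1])$ if and only if $T[j+1-k..j+1]=\alpha^{k+1}$ or $k\le|\mathit{lrs}_{i,j}|$.
   Context: $T[a..b]$ denotes the substring of $T$ from position $a$ to $b$; $\alpha^m$ is the string of $m$ copies of character $\alpha$. For strings $S,w$, $\#\mathit{occ}_S(w)$ is the number of positions at which $w$ occurs in $S$, with $\#\mathit{occ}_S(\varepsilon)=|S|+1$. A substring $w$ of $S$ is unique in $S$ if $\#\mathit{occ}_S(w)=1$ and repeating if $\#\mathit{occ}_S(w)\ge 2$. For $1\le i\le j\le n$, $\mathsf{MUS}(T[i..j])$ is the set of intervals $[s,t]$ (positions in $T$) with $i\le s\le t\le j$ such that $T[s..t]$ is unique in $T[i..j]$ and every proper substring of $T[s..t]$ (including the empty string) is repeating in $T[i..j]$. $\mathit{lrs}_{i,j}$ is the longest suffix of $T[i..j]$ that occurs at least twice in $T[i..j]$ (possibly empty). *)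

(* Strings are sequences over an eqType; positions in T are 1-based. *)
From mathcomp Require Import all_boot.
Set Implicit Arguments. Unset Strict Implicit. Unset Printing Implicit Defensive.

Definition sub (A : eqType) (T : seq A) (a b : nat) : seq A :=
  take (b.+1 - a) (drop a.-1 T).

(* #occ_S(w): number of starting positions p (0-based, 0 <= p <= |S|-|w|)
   at which w occurs in S.  In particular #occ_S(eps) = |S|+1. *)
Definition occ (A : eqType) (S w : seq A) : nat :=
  count (fun p => take (size w) (drop p S) == w) (iota 0 (size S - size w).+1).

Definition unique_in (A : eqType) (S w : seq A) : Prop := occ S w = 1.
Definition repeating_in (A : eqType) (S w : seq A) : Prop := 2 <= occ S w.

Definition inMUS (A : eqType) (T : seq A) (i j s t : nat) : Prop :=
  [/\ i <= s, s <= t, t <= j,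
      unique_in (sub T i j) (sub T s t)
    & forall w : seq A, infix w (sub T s t) -> w != sub T s t ->
        repeating_in (sub T i j) w].

(* |lrs_{i,j}|: length of the longest suffix of T[i..j] occurring at least twice
   in T[i..j] (the empty suffix always qualifies when i <= j). *)
Definition lrs_len (A : eqType) (T : seq A) (i j : nat) : nat :=
  let S := sub T i j in
  \max_(k < (size S).+1 | 2 <= occ S (drop (size S - k) S)) (k : nat).

(** Write X = T[i..j+1] = S alpha with S = T[i..j], and let u be the suffix of X
    of length k+1.  Since the suffix of length k of X repeats and the one of
    length k+1 does not, u is unique in X, and every proper infix of u is an
    infix either of that repeating suffix or of the prefix u' = T[j+1-k..j] of u;
    so [j+1-k, j+1] is a MUS iff u' repeats in S alpha.  Two occurrences of u' in
    S alpha either both lie in S, which means k <= |lrs_{i,j}|, or one of them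
    ends at alpha; as u' is also a suffix of S, the string u' alpha is then equal
    to its shift by one letter, i.e. it is the power alpha^{k+1}. *)

From mathcomp Require Import all_boot zify.

Set Implicit Arguments.
Unset Strict Implicit.
Unset Printing Implicit Defensive.

Section Occurrences.

Variable A : eqType.
Implicit Types S u w x y : seq A.

(* The bound on p matters only for the empty word, which occurs at 0..|S|. *)
Definition occurs_at S w p := (p <= size S) && (take (size w) (drop p S) == w).

Lemma occE S w : occ S w = count (occurs_at S w) (iota 0 (size S - size w).+1).
Proof.
apply: eq_in_count => p; rewrite mem_iota /occurs_at => /andP[_ lt_p].
by have -> : p <= size S by lia.
Qed.

Lemma occurs_atP S w p :
  reflect (exists x y, S = x ++ w ++ y /\ size x = p) (occurs_at S w p).
Proof.
apply: (iffP andP) => [[le_p /eqP occ_p] | [x [y [-> <-]]]]; last first.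
  by rewrite drop_size_cat // take_size_cat // size_cat leq_addr.
have le_w : size w <= size S - p.
  by have := congr1 size occ_p; rewrite size_take size_drop; case: ltnP; lia.
exists (take p S), (drop (size w) (drop p S)); split.
  by rewrite -{1}(cat_take_drop p S) -{1}(cat_take_drop (size w) (drop p S)) occ_p.
by rewrite size_take; case: ltnP; lia.
Qed.

Lemma occurs_at_size S w p : occurs_at S w p -> p + size w <= size S.
Proof. by case/occurs_atP=> x [y [-> <-]]; rewrite !size_cat; lia. Qed.

Lemma repeatingP S w :
  repeating_in S w <-> exists p1 p2, [/\ p1 != p2, occurs_at S w p1 & occurs_at S w p2].
Proof.
rewrite /repeating_in occE -size_filter.
set ps := filter _ _; have ps_uniq : uniq ps by rewrite filter_uniq ?iota_uniq.
split=> [|[p1 [p2 [neq_p occ_p1 occ_p2]]]].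
  case def_ps: ps ps_uniq => [|p1 [|p2 ps']] //= /andP[p1_notin _] _.
  have in_ps q : q \in [:: p1, p2 & ps'] -> occurs_at S w q.
    by rewrite -def_ps mem_filter => /andP[].
  exists p1, p2; split; rewrite ?in_ps ?inE ?eqxx ?orbT //.
  by apply: contraNneq p1_notin => ->; apply: mem_head.
have in_ps p : occurs_at S w p -> p \in ps.
  by move=> occ_p; rewrite mem_filter occ_p mem_iota; have := occurs_at_size occ_p; lia.
move: (in_ps _ occ_p1) (in_ps _ occ_p2); rewrite {ps_uniq in_ps}; case: ps => [|q [|q' ps']] //=.
by rewrite !inE => /eqP eq1 /eqP eq2; rewrite eq1 eq2 eqxx in neq_p.
Qed.

Lemma unique_in_occurs S w p : occurs_at S w p -> ~ repeating_in S w -> unique_in S w.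
Proof.
move=> occ_p not_rep; suff : 0 < occ S w by rewrite /unique_in /repeating_in in not_rep *; lia.
rewrite occE -has_count; apply/hasP; exists p => //.
by rewrite mem_iota; have := occurs_at_size occ_p; lia.
Qed.

Lemma occ_self S : occ S S = 1.
Proof. by rewrite /occ subnn /= drop0 take_size eqxx. Qed.

Lemma repeating_nil S : 0 < size S -> repeating_in S [::].
Proof.
move=> S_gt0; apply/repeatingP; exists 0, 1; split => //; apply/occurs_atP.
  by exists [::], S.
exists (take 1 S), (drop 1 S); rewrite cat_take_drop size_take.
by case: (size S) S_gt0 => [|[|]].
Qed.

Lemma repeating_infix S u w : infix w u -> repeating_in S u -> repeating_in S w.
Proof.
case/infixP=> a [b ->] /repeatingP[p1 [p2 [neq_p occ_p1 occ_p2]]].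
have shift p : occurs_at S (a ++ w ++ b) p -> occurs_at S w (p + size a).
  case/occurs_atP=> x [y [-> <-]]; apply/occurs_atP; exists (x ++ a), (b ++ y).
  by rewrite !catA size_cat.
apply/repeatingP; exists (p1 + size a), (p2 + size a); split; rewrite ?shift //.
by rewrite eqn_add2r.
Qed.

Lemma repeating_catr S S' w : repeating_in S w -> repeating_in (S ++ S') w.
Proof.
have extend p : occurs_at S w p -> occurs_at (S ++ S') w p.
  by case/occurs_atP=> x [y [-> <-]]; apply/occurs_atP; exists x, (y ++ S'); rewrite !catA.
by case/repeatingP=> p1 [p2 [neq_p /extend ? /extend ?]]; apply/repeatingP; exists p1, p2.
Qed.

Lemma occurs_at_rcons S a w p :
  occurs_at (rcons S a) w p -> p + size w <= size S -> occurs_at S w p.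
Proof.
move=> /andP[_ occ_p] le_pw; have le_p : p <= size S by lia.
rewrite /occurs_at le_p -(@takel_cat _ _ _ [:: a]) ?size_drop; last by lia.
by rewrite cats1 -drop_rcons.
Qed.

Lemma occurs_at_suffix S w p : occurs_at S w p -> size S <= p + size w -> suffix w S.
Proof.
case/occurs_atP=> x [y [-> <-]]; rewrite !size_cat => le_y.
have /nilP-> : nilp y by rewrite /nilp; apply/eqP; lia.
by rewrite cats0 suffix_suffix.
Qed.

Lemma repeating_rcons S a w :
  repeating_in (rcons S a) w -> repeating_in S w \/ suffix w (rcons S a).
Proof.
case/repeatingP=> p1 [p2 [neq_p occ_p1 occ_p2]].
have [le_p1 | gt_p1] := leqP (p1 + size w) (size S); last first.
  by right; apply: occurs_at_suffix occ_p1 _; rewrite size_rcons.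
have [le_p2 | gt_p2] := leqP (p2 + size w) (size S); last first.
  by right; apply: occurs_at_suffix occ_p2 _; rewrite size_rcons.
left; apply/repeatingP; exists p1, p2.
by split; [| exact: occurs_at_rcons occ_p1 le_p1 | exact: occurs_at_rcons occ_p2 le_p2].
Qed.

Lemma repeating_nseq S a k : repeating_in (S ++ nseq k.+1 a) (nseq k a).
Proof.
apply/repeatingP; exists (size S), (size S).+1; split; rewrite ?neq_ltn ?ltnSn //.
  by apply/occurs_atP; exists S, [:: a]; rewrite -addn1 nseqD catA.
by apply/occurs_atP; exists (rcons S a), [::]; rewrite cats0 size_rcons cat_rcons.
Qed.

Lemma rcons_eq_cons_nseq u a c : rcons u a = c :: u -> rcons u a = nseq (size u).+1 a.
Proof.
elim: u c => [|b u IHu] c //= [_ eq_u]; have eq_bu := IHu _ eq_u.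
by rewrite eq_bu; move: eq_bu; rewrite eq_u => -[->].
Qed.

Lemma proper_infixes_rcons X u a :
  (forall w, infix w (rcons u a) -> w != rcons u a -> repeating_in X w) <->
  repeating_in X u /\ repeating_in X (behead (rcons u a)).
Proof.
split=> [rep_infixes | [rep_u rep_behead] w /infixP[b [c def_u]] neq_w].
  split; apply: rep_infixes.
  - exact: infix_rcons.
  - by apply/eqP => /(congr1 size); rewrite size_rcons; lia.
  - by rewrite headI infix_cons.
  - by rewrite headI /=; apply/eqP => /(congr1 size) /=; lia.
case/lastP: c def_u => [|c z] def_u.
  case: b def_u => [|x b] def_u; first by rewrite def_u cats0 eqxx in neq_w.
  by apply: repeating_infix rep_behead; rewrite def_u /= infix_infix.
apply: repeating_infix rep_u; move: def_u; rewrite -!rcons_cat => /eqP.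
by rewrite eqseq_rcons => /andP[/eqP-> _]; apply: infix_infix.
Qed.

End Occurrences.

Section LongestRepeatingSuffix.

Variable A : eqType.
Implicit Types S u w : seq A.

Definition lastn k S := drop (size S - k) S.

Lemma size_lastn k S : k <= size S -> size (lastn k S) = k.
Proof. by rewrite size_drop; lia. Qed.

Lemma lastn_size S : lastn (size S) S = S.
Proof. by rewrite /lastn subnn drop0. Qed.

Lemma lastn_lastn k l S : k <= l -> lastn k (lastn l S) = lastn k S.
Proof. by rewrite /lastn size_drop drop_drop => le_kl; congr drop; lia. Qed.

Lemma lastn_rcons k S a : k <= size S -> lastn k.+1 (rcons S a) = rcons (lastn k S) a.
Proof. by move=> le_k; rewrite /lastn size_rcons subSS drop_rcons // leq_subr. Qed.

Lemma behead_lastn k S : k < size S -> behead (lastn k.+1 S) = lastn k S.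
Proof. by rewrite /lastn -drop1 drop_drop => lt_k; congr drop; lia. Qed.

Lemma infix_lastn k l S : k <= l -> infix (lastn k S) (lastn l S).
Proof.
move=> le_kl; rewrite -(lastn_lastn S le_kl); set L := lastn l S.
by rewrite -{2}(cat_take_drop (size L - k) L) suffix_infix.
Qed.

Definition lrs S := \max_(k < (size S).+1 | 2 <= occ S (lastn k S)) k.

Lemma lrs_max k S : k <= size S -> repeating_in S (lastn k S) -> k <= lrs S.
Proof.
by move=> le_k rep_k; apply: (leq_bigmax_cond (Ordinal (_ : k < (size S).+1))).
Qed.

Lemma repeating_lastn_lrs S : 0 < size S -> repeating_in S (lastn (lrs S) S).
Proof.
move=> S_gt0; have rep0 : repeating_in S (lastn 0 S).
  by rewrite /lastn subn0 drop_size; apply: repeating_nil.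
by rewrite /lrs (bigmax_eq_arg ord0 rep0); case: arg_maxnP.
Qed.

Lemma lrs_lt_size S : 0 < size S -> lrs S < size S.
Proof.
move=> S_gt0; have rep_lrs := repeating_lastn_lrs S_gt0.
have : lrs S <= size S by apply/bigmax_leqP => k _; rewrite -ltnS.
rewrite leq_eqVlt => /predU1P[eq_lrs | //].
by move: rep_lrs; rewrite eq_lrs lastn_size /repeating_in occ_self.
Qed.

Lemma repeating_lastnP k S : 0 < size S -> k <= size S ->
  repeating_in S (lastn k S) <-> k <= lrs S.
Proof.
move=> S_gt0 le_k; split; first exact: lrs_max.
by move/infix_lastn/repeating_infix; apply; apply: repeating_lastn_lrs.
Qed.

Lemma unique_lastn_lrs S : 0 < size S -> unique_in S (lastn (lrs S).+1 S).
Proof.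
move=> S_gt0; have lt_lrs := lrs_lt_size S_gt0.
apply: (@unique_in_occurs _ _ _ (size S - (lrs S).+1)) => [|rep].
  apply/occurs_atP; exists (take (size S - (lrs S).+1) S), [::].
  by rewrite cats0 cat_take_drop size_takel ?leq_subr.
by have := lrs_max lt_lrs rep; rewrite ltnn.
Qed.

End LongestRepeatingSuffix.

Section MinimalUniqueSuffix.

Variable A : eqType.
Implicit Types S u w : seq A.

Lemma repeating_rcons_lastnP S a k : 0 < size S -> k <= size S ->
  repeating_in (rcons S a) (lastn k S) <->
  rcons (lastn k S) a = nseq k.+1 a \/ k <= lrs S.
Proof.
move=> S_gt0 le_k; rewrite -repeating_lastnP //.
have size_u : size (lastn k S) = k by apply: size_lastn.
have def_S : S = take (size S - k) S ++ lastn k S by rewrite cat_take_drop.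
set u := lastn k S in size_u def_S *; split.
- case/repeating_rcons => [rep_u | suffix_u]; [by right | left].
  have behead_u : behead (rcons u a) = u.
    rewrite /u -lastn_rcons // behead_lastn ?size_rcons ?ltnS //.
    by move: suffix_u; rewrite suffixE size_u => /eqP.
  by rewrite -size_u; apply: (@rcons_eq_cons_nseq _ _ _ (head a u)); rewrite headI behead_u.
- case=> [u_const | rep_u]; last by rewrite -cats1; apply: repeating_catr.
  have -> : u = nseq k a.
    by have := congr1 (take k) u_const; rewrite -cats1 take_size_cat // take_nseq.
  by rewrite def_S -cats1 -catA cats1 u_const; apply: repeating_nseq.
Qed.

Definition minimal_unique S u :=
  unique_in S u /\ forall w, infix w u -> w != u -> repeating_in S w.

Lemma minimal_unique_lrs_rcons S a : 0 < size S ->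
  let k := lrs (rcons S a) in
  minimal_unique (rcons S a) (lastn k.+1 (rcons S a)) <->
  lastn k.+1 (rcons S a) = nseq k.+1 a \/ k <= lrs S.
Proof.
move=> S_gt0 k; set X := rcons S a.
have X_gt0 : 0 < size X by rewrite size_rcons.
have le_k : k <= size S by rewrite -ltnS -(size_rcons S a); apply: lrs_lt_size.
have unique_u := unique_lastn_lrs X_gt0.
have rep_behead : repeating_in X (behead (lastn k.+1 X)).
  by rewrite behead_lastn ?size_rcons //; apply: repeating_lastn_lrs.
rewrite /X lastn_rcons // -/X in unique_u rep_behead *.
rewrite -repeating_rcons_lastnP // -/X /minimal_unique proper_infixes_rcons.
by tauto.
Qed.

End MinimalUniqueSuffix.

Section Substrings.

Variable A : eqType.
Implicit Type T : seq A.

Lemma lrs_lenE T i j : lrs_len T i j = lrs (sub T i j).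
Proof. by []. Qed.

Lemma size_sub T i t : 1 <= i -> t <= size T -> size (sub T i t) = t.+1 - i.
Proof. by move=> i_gt0 le_t; rewrite size_take size_drop; case: ltnP; lia. Qed.

Lemma sub_rcons T i j a : 1 <= i -> i <= j.+1 -> onth T j = Some a ->
  sub T i j.+1 = rcons (sub T i j) a.
Proof.
move=> i_gt0 le_ij T_j; have lt_j : j < size T by rewrite -onthTE T_j.
rewrite /sub (_ : j.+2 - i = (j.+1 - i).+1); last by lia.
rewrite (take_nth a) ?size_drop; last by lia.
rewrite nth_drop (_ : i.-1 + _ = j); last by lia.
by move/(onth_nth a): T_j ->.
Qed.

Lemma sub_lastn T i s t : 1 <= i -> i <= s -> s <= t.+1 -> t <= size T ->
  sub T s t = lastn (t.+1 - s) (sub T i t).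
Proof.
move=> i_gt0 le_is le_st le_t; rewrite /lastn size_sub // /sub.
rewrite (_ : t.+1 - i - (t.+1 - s) = s - i); last by lia.
rewrite (_ : t.+1 - i = (t.+1 - s) + (s - i)); last by lia.
by rewrite -take_drop drop_drop; congr (take _ (drop _ _)); lia.
Qed.

End Substrings.

Theorem lemma4 (A : eqType) (T : seq A) (i j : nat) (alpha : A) :
  1 <= i -> i <= j -> j < size T ->
  onth T j = Some alpha ->   (* alpha = T[j+1] *)
  let k := lrs_len T i j.+1 in
  inMUS T i j.+1 (j.+1 - k) j.+1 <->
  (sub T (j.+1 - k) j.+1 = nseq k.+1 alpha \/ k <= lrs_len T i j).
Proof.
move=> i_gt0 le_ij lt_j T_j k.
have def_X := sub_rcons i_gt0 (leqW le_ij) T_j.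
have S_gt0 : 0 < size (sub T i j) by rewrite size_sub; lia.
have lt_k : k < size (sub T i j.+1).
  by rewrite /k lrs_lenE; apply: lrs_lt_size; rewrite def_X size_rcons.
rewrite size_sub // in lt_k.
have def_u : sub T (j.+1 - k) j.+1 = lastn k.+1 (sub T i j.+1).
  by rewrite (sub_lastn i_gt0 _ _ lt_j); [congr lastn | ..]; lia.
have -> : inMUS T i j.+1 (j.+1 - k) j.+1 <->
          minimal_unique (sub T i j.+1) (sub T (j.+1 - k) j.+1).
  by split=> [[] | []]; [| split]; rewrite ?leq_subr //; lia.
rewrite def_u /k !lrs_lenE def_X.
exact: minimal_unique_lrs_rcons.
Qed.
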